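(* Let $i\in\mathbb{N}$ be fixed. Let $G\in\mathcal{G}_{k,n,p}$ and $v\neq w\in V(G)$, and let $X=X_0,X_1,\dots$ be a simple random walk on $G$. Then \[ \mathbb{P}[T_{wv}=i]=\mathbb{P}_w[X_i=v]\pm\mathcal{O}\!\left(\frac{1}{p^2n^2}\right). \]
   Context: Fix an integer $k\ge2$ and let $p=p(n)$ satisfy $\frac{\log n}{n^{(k-1)/k}}\le p\le 1-\Omega(\frac{\log^4 n}{n})$. $\mathcal{G}_{k,n,p}$ denotes the set of graphs $G$ on $n$ vertices satisfying: (i) $G$ is not bipartite; (ii) $\operatorname{diam}(G)\le k$; (iii) every vertex has degree $d(v)=pn\pm\mathcal{O}(\sqrt{pn\log n})$; (iv) $2|E(G)|=pn^2\pm\mathcal{O}(\sqrt{pn^2\log n})$; (v) $|N(v)\cap N(w)|=p^2n\pm\mathcal{O}(\max\{\sqrt{p^2n\log n},\log n\})$ for all $v\ne w$; (vi) the unit eigenvector $\phi$ of the largest adjacency eigenvalue has entries $\phi_i=\frac1{\sqrt n}\pm\mathcal{O}(\frac{\log^{3/2}n}{\sqrt p\,n\log(pn)})$; (vii) $\lambda_1=(1+o(1))pn$; (viii) $\max\{|\lambda_2|,|\lambda_n|\}=\mathcal{O}(\sqrt{pn})$, where $\lambda_1\ge\dots\ge\lambda_n$ are the adjacency eigenvalues. Asymptotic notation is as $n\to\infty$ with constants independent of $n$. $\mathbb{P}_w[\cdot]=\mathbb{P}[\cdot\mid X_0=w]$, and $T_{wv}$ is the first time the walk started at $w$ hits $v$.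 *)

From HB Require Import structures.
From mathcomp Require Import all_boot all_order all_algebra.
From mathcomp Require Import all_classical all_reals all_analysis.
Set Implicit Arguments. Unset Strict Implicit. Unset Printing Implicit Defensive.
Import Order.TTheory GRing.Theory Num.Theory.
Local Open Scope ring_scope.

Section Graphs.
Variable R : realType.
Variable n : nat.

Definition simple_graph (e : rel 'I_n) : Prop :=
  (forall x y, e x y = e y x) /\ (forall x, ~~ e x x).

Definition deg (e : rel 'I_n) (v : 'I_n) : nat := #|[set u | e v u]|.

Definition edges (e : rel 'I_n) : {set {set 'I_n}} :=
  [set S : {set 'I_n} | [exists x, exists y, e x y && (S == [set x; y])]].

Definition codeg (e : rel 'I_n) (v w : 'I_n) : nat := #|[set u | e v u && e w u]|.

Definition bipartite (e : rel 'I_n) : Prop :=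
  exists f : 'I_n -> bool, forall x y, e x y -> f x != f y.

Definition diam_le (e : rel 'I_n) (k : nat) : Prop :=
  forall x y : 'I_n, exists s : seq 'I_n,
    [/\ path e x s, last x s = y & (size s <= k)%N].

Definition adj (e : rel 'I_n) : 'M[R]_n := \matrix_(x, y) (e x y)%:R.

(* lam is the nonincreasing list lambda_1 >= ... >= lambda_n (indexed from 0)
   of the adjacency eigenvalues with multiplicity: A = Q diag(lam) Q^T with Q
   orthogonal. *)
Definition adj_spectrum (e : rel 'I_n) (lam : nat -> R) : Prop :=
  (forall a b : nat, (a <= b)%N -> (b < n)%N -> lam b <= lam a) /\
  exists Q : 'M[R]_n, Q^T *m Q = 1%:M /\
    adj e = Q *m diag_mx (\row_(j < n) lam j) *m Q^T.

Definition srw (e : rel 'I_n) (x y : 'I_n) : R := (e x y)%:R / (deg e x)%:R.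

Definition path_prob (e : rel 'I_n) (i : nat) (x : {ffun 'I_i.+1 -> 'I_n}) : R :=
  \prod_(j < i) srw e (x (inord j)) (x (inord j.+1)).

Definition walk_at (e : rel 'I_n) (i : nat) (w v : 'I_n) : R :=
  \sum_(x : {ffun 'I_i.+1 -> 'I_n} | (x ord0 == w) && (x ord_max == v))
     path_prob e x.

Definition first_hit (e : rel 'I_n) (i : nat) (w v : 'I_n) : R :=
  \sum_(x : {ffun 'I_i.+1 -> 'I_n} | [&& x ord0 == w, x ord_max == v &
        [forall j : 'I_i, x (inord j) != v]])
     path_prob e x.

(* Membership in G_{k,n,p}; the constants hidden in the O(.) / o(1) are
   explicit parameters: c_deg, c_edge, c_codeg, c_phi, c_eig, and eps(n) -> 0
   for lambda_1 = (1 + o(1)) p n. *)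
Definition in_Gknp (k : nat) (p : R) (c_deg c_edge c_codeg c_phi c_eig : R)
    (eps : R) (e : rel 'I_n) : Prop :=
  let nR := n%:R in
  simple_graph e /\
  ~ bipartite e /\
  diam_le e k /\
  (forall v, `|(deg e v)%:R - p * nR| <= c_deg * Num.sqrt (p * nR * ln nR)) /\
  `|(2 * #|edges e|)%:R - p * nR ^+ 2| <= c_edge * Num.sqrt (p * nR ^+ 2 * ln nR) /\
  (forall v w, v != w -> `|(codeg e v w)%:R - p ^+ 2 * nR|
      <= c_codeg * Num.max (Num.sqrt (p ^+ 2 * nR * ln nR)) (ln nR)) /\
      exists lam : nat -> R, adj_spectrum e lam /\
        [/\ exists phi : 'cV[R]_n,
              [/\ adj e *m phi = lam 0%N *: phi,
                  \sum_j phi j ord0 ^+ 2 = 1 &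
                  forall j, `|phi j ord0 - 1 / Num.sqrt nR|
                     <= c_phi * (ln nR `^ (3%:R / 2%:R)
                                 / (Num.sqrt p * nR * ln (p * nR)))],
            `|lam 0%N - p * nR| <= `|eps| * (p * nR) &
            Num.max `|lam 1%N| `|lam n.-1| <= c_eig * Num.sqrt (p * nR)].

End Graphs.

From HB Require Import structures.
From mathcomp Require Import all_boot all_order all_algebra.
From mathcomp Require Import all_classical all_reals all_analysis.
From mathcomp Require Import zify lra.
Set Implicit Arguments. Unset Strict Implicit. Unset Printing Implicit Defensive.
Import Order.TTheory GRing.Theory Num.Theory.
Local Open Scope ring_scope.

(* A walk from w <> v that is at v at time i but has not first hit v at time i
   was already at v at some time 0 < j < i.  When every degree is at least d, a
   single step lands on a prescribed vertex with probability at most 1/d, so each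
   such j contributes at most 1/d^2 and the difference is at most i/d^2.  For
   large n one has d >= pn/2: the degree deviation c sqrt(pn log n) is at most
   pn/2 once pn >= (4c^2+1) log n, which follows from p >= log n / n^((k-1)/k)
   because n^(1/k) -> oo. *)

Section PathSums.
Variables (R : numDomainType) (T : finType).

Definition rcons_ffun i (x : {ffun 'I_i.+1 -> T}) (y : T) : {ffun 'I_i.+2 -> T} :=
  [ffun t : 'I_i.+2 => if (t < i.+1)%N then x (inord t) else y].

Definition belast_ffun i (z : {ffun 'I_i.+2 -> T}) : {ffun 'I_i.+1 -> T} :=
  [ffun t => z (widen_ord (leqnSn _) t)].

Lemma rcons_ffun_bij i :
  bijective (fun xy : {ffun 'I_i.+1 -> T} * T => rcons_ffun xy.1 xy.2).
Proof.
exists (fun z => (belast_ffun z, z ord_max)).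
  case=> x y /=; congr pair; last by rewrite ffunE /= ltnn.
  by apply/ffunP=> t; rewrite !ffunE /= ltn_ord inord_val.
move=> z; apply/ffunP=> t; rewrite !ffunE /=; case: ifP => ht.
  by congr (z _); apply/val_inj; rewrite /= inordK.
congr (z _); apply/val_inj => /=; move: (ltn_ord t) ht; rewrite ltnS leq_eqVlt.
by case/orP=> [/eqP ->|->].
Qed.

Lemma rcons_ffun_inord i x y j :
  (j <= i)%N -> @rcons_ffun i x y (inord j) = x (inord j).
Proof. by move=> hj; rewrite ffunE inordK ?ltnS ?hj // ltnW. Qed.

Lemma rcons_ffun_last i x y : @rcons_ffun i x y (inord i.+1) = y.
Proof. by rewrite ffunE inordK // ltnn. Qed.

Lemma sum_paths_prod_le i (g : 'I_i -> T -> T -> R) (b : 'I_i -> R) (w : T) :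
    (forall t u y, 0 <= g t u y) -> (forall t u, \sum_y g t u y <= b t) ->
  \sum_(x : {ffun 'I_i.+1 -> T} | x ord0 == w)
      \prod_(t < i) g t (x (inord t)) (x (inord t.+1)) <= \prod_(t < i) b t.
Proof.
elim: i g b => [|i IH] g b g_ge0 g_le.
  rewrite big_ord0 (big_pred1 [ffun=> w]) ?big_ord0 // => x /=.
  apply/eqP/eqP=> [x0w|->]; last by rewrite ffunE.
  by apply/ffunP=> t; rewrite ord1 ffunE.
rewrite (reindex _ (onW_bij _ (rcons_ffun_bij i))) /=.
rewrite (eq_bigl (fun xy : {ffun _ -> T} * T => (xy.1 ord0 == w) && true));
  last by case=> x y /=; rewrite ffunE andbT /= -[ord0 in RHS]inord_val.
rewrite -(pair_big_dep (fun x : {ffun 'I_i.+1 -> T} => x ord0 == w)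
  (fun _ _ => true) (fun x y => \prod_(t < i.+1)
     g t (rcons_ffun x y (inord t)) (rcons_ffun x y (inord t.+1)))) /=.
rewrite [X in _ <= X]big_ord_recr /=.
have b_ge0 : 0 <= b ord_max by apply: le_trans (g_le _ w); apply: sumr_ge0.
apply: le_trans (ler_wpM2r b_ge0 (IH _ _ (fun t => g_ge0 _) (fun t => g_le _))).
rewrite big_distrl /=; apply: ler_sum => x _.
under eq_bigr => y _ do
  rewrite big_ord_recr /= rcons_ffun_inord // rcons_ffun_last.
under eq_bigr => y _ do under eq_bigr => t _ do
  rewrite !rcons_ffun_inord ?(ltnW (ltn_ord t)) //.
rewrite -big_distrr /= ler_wpM2l ?g_le //.
by apply: prodr_ge0 => t _.
Qed.

End PathSums.

Section RandomWalk.
Variables (R : realType) (n : nat) (e : rel 'I_n).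

Lemma srw_ge0 u y : 0 <= srw R e u y.
Proof. by rewrite /srw divr_ge0. Qed.

Lemma sum_srw u : (0 < deg e u)%N -> \sum_y srw R e u y = 1.
Proof.
move=> deg_gt0; rewrite /srw -big_distrl /= -natr_sum.
have -> : (\sum_y (e u y : nat))%N = deg e u.
  rewrite /deg -sum1_card [RHS]big_mkcond /=; apply: eq_bigr => y _.
  by rewrite inE; case: (e u y).
by rewrite divff // pnatr_eq0 -lt0n.
Qed.

Lemma path_prob_ge0 i (x : {ffun 'I_i.+1 -> 'I_n}) : 0 <= path_prob R e x.
Proof. by apply: prodr_ge0 => j _; apply: srw_ge0. Qed.

Lemma first_hit_le_walk_at i w v : first_hit R e i w v <= walk_at R e i w v.
Proof.
rewrite /first_hit /walk_at [X in _ <= X]big_mkcond [X in X <= _]big_mkcond.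
apply: ler_sum => x _; rewrite andbA.
by case: ifP => [/andP[-> //]|_]; case: ifP => // _; apply: path_prob_ge0.
Qed.

Lemma walk_at_sub_first_hit_le i w v :
  walk_at R e i w v - first_hit R e i w v <=
  \sum_(j < i) \sum_(x : {ffun 'I_i.+1 -> 'I_n} | x ord0 == w)
     path_prob R e x * (x (inord j) == v)%:R * (x ord_max == v)%:R.
Proof.
set avoids := fun x : {ffun 'I_i.+1 -> 'I_n} => [forall j : 'I_i, x (inord j) != v].
have -> : first_hit R e i w v = \sum_(x : {ffun 'I_i.+1 -> 'I_n} |
    (x ord0 == w) && (x ord_max == v) && avoids x) path_prob R e x.
  by apply: eq_bigl => x; rewrite andbA.
rewrite /walk_at (bigID avoids) /= addrC addrK exchange_big /=.
rewrite big_mkcond [X in _ <= X]big_mkcond /=; apply: ler_sum => x _.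
case: (x ord0 == w) => //=; case: (x ord_max == v) => /=.
  case: ifP => [|_]; last first.
    by apply: sumr_ge0 => j _; rewrite mulr1 mulr_ge0 ?path_prob_ge0.
  case/forallPn => j; rewrite negbK => xj_v.
  rewrite (bigD1 j) //= xj_v !mulr1 lerDl.
  by apply: sumr_ge0 => j' _; rewrite mulr1 mulr_ge0 ?path_prob_ge0.
by rewrite big1 // => j _; rewrite mulr0.
Qed.

Variable d : R.
Hypothesis d_gt0 : 0 < d.
Hypothesis deg_ge : forall u, d <= (deg e u)%:R.

Lemma deg_gt0 u : (0 < deg e u)%N.
Proof. by rewrite -(ltr0n R); apply: lt_le_trans d_gt0 (deg_ge u). Qed.

Lemma srw_le u y : srw R e u y <= d^-1.
Proof.
rewrite /srw; apply: le_trans (_ : (deg e u)%:R^-1 <= _).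
  by rewrite ler_piMl ?invr_ge0 // lern1 leq_b1.
by rewrite lef_pV2 ?posrE ?ltr0n ?deg_gt0.
Qed.

Lemma sum_paths_visits_le i w v (S : {set 'I_i}) :
  \sum_(x : {ffun 'I_i.+1 -> 'I_n} | x ord0 == w)
     path_prob R e x * \prod_(t in S) (x (inord t.+1) == v)%:R <= d^-1 ^+ #|S|.
Proof.
pose g t u y := srw R e u y * (if t \in S then (y == v)%:R else 1).
pose b t := if t \in S then d^-1 else 1.
have -> : d^-1 ^+ #|S| = \prod_(t < i) b t.
  by rewrite -big_mkcond /= prodr_const.
under eq_bigr => x _ do rewrite /path_prob [\prod_(t in S) _]big_mkcond -big_split /=.
apply: (sum_paths_prod_le (g := g)).
  by move=> t u y; rewrite mulr_ge0 ?srw_ge0 //; case: ifP.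
move=> t u; rewrite /g /b; case: ifP => _.
  rewrite (bigD1 v) //= eqxx mulr1 big1 ?addr0 ?srw_le // => y /negbTE ->.
  by rewrite mulr0.
by under eq_bigr do rewrite mulr1; rewrite sum_srw ?deg_gt0.
Qed.

Lemma sum_paths_revisit_le i w v (j : 'I_i) : v != w ->
  \sum_(x : {ffun 'I_i.+1 -> 'I_n} | x ord0 == w)
     path_prob R e x * (x (inord j) == v)%:R * (x ord_max == v)%:R <= d^-1 ^+ 2.
Proof.
move=> v_neq_w; have [j0|j_gt0] := posnP j.
  rewrite big1 ?exprn_ge0 ?invr_ge0 ?(ltW d_gt0) // => x /eqP x0_w.
  have -> : inord j = ord0 :> 'I_i.+1 by apply/val_inj; rewrite /= j0 inordK.
  by rewrite x0_w eq_sym (negbTE v_neq_w) mulr0 mul0r.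
have j_lt_i := ltn_ord j.
have [j_pred_lt_i i_pred_lt_i] : (j.-1 < i)%N /\ (i.-1 < i)%N by lia.
pose a : 'I_i := Ordinal j_pred_lt_i.
pose b : 'I_i := Ordinal i_pred_lt_i.
have a_neq_b : a != b by rewrite -val_eqE /=; lia.
have visits (x : {ffun 'I_i.+1 -> 'I_n}) :
    (x (inord j) == v)%:R * (x ord_max == v)%:R
    = \prod_(t in [set a; b]) (x (inord t.+1) == v)%:R :> R.
  rewrite big_setU1 ?inE // big_set1 /= !prednK //; last by lia.
  by rewrite -[ord_max]inord_val.
under eq_bigr => x _ do rewrite -mulrA visits.
by have := sum_paths_visits_le w v [set a; b]; rewrite cards2 a_neq_b.
Qed.

Lemma dist_first_hit_walk_at_le i w v : v != w ->
  `|first_hit R e i w v - walk_at R e i w v| <= i%:R * d^-1 ^+ 2.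
Proof.
move=> v_neq_w; rewrite distrC ger0_norm ?subr_ge0 ?first_hit_le_walk_at //.
apply: le_trans (walk_at_sub_first_hit_le i w v) _.
apply: le_trans (_ : \sum_(j < i) d^-1 ^+ 2 <= _).
  by apply: ler_sum => j _; apply: sum_paths_revisit_le.
by rewrite sumr_const card_ord mulr_natl.
Qed.

End RandomWalk.

Section Asymptotics.
Variable R : realType.

Lemma le_powR_invn (M x : R) (k : nat) :
  (0 < k)%N -> 0 <= M -> M ^+ k <= x -> M <= x `^ k%:R^-1.
Proof.
move=> k_gt0 M_ge0 Mk_le_x.
have x_ge0 : 0 <= x := le_trans (exprn_ge0 k M_ge0) Mk_le_x.
rewrite -(ler_pXn2r k_gt0) ?nnegrE ?powR_ge0 //.
rewrite -[in X in _ <= X]powR_mulrn ?powR_ge0 // -powRrM.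
by rewrite mulVf ?pnatr_eq0 -?lt0n ?powRr1.
Qed.

Lemma ln_mul_root_le (x q : R) (k : nat) : (0 < k)%N -> 0 < x ->
  ln x / x `^ (k.-1%:R / k%:R) <= q -> ln x * x `^ k%:R^-1 <= q * x.
Proof.
move=> k_gt0 x_gt0 q_ge.
have x_split : x = x `^ (k.-1%:R / k%:R) * x `^ k%:R^-1.
  rewrite -powRD; last by apply/implyP => _; rewrite gt_eqF.
  rewrite -[X in _ + X]mul1r -mulrDl natr1 prednK // mulfV ?pnatr_eq0 -?lt0n //.
  by rewrite powRr1 ?ltW.
by rewrite [X in _ <= _ * X]x_split mulrA ler_pM2r ?powR_gt0 // -ler_pdivrMr ?powR_gt0.
Qed.

Lemma mul_sqrt_le_half (c y L : R) : 0 <= L -> 0 < y ->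
  (4 * c ^+ 2 + 1) * L <= y -> c * Num.sqrt (y * L) <= y / 2.
Proof.
move=> L_ge0 y_gt0 y_ge.
have [c_le0|c_gt0] := leP c 0.
  by apply: le_trans (_ : 0 <= _); [rewrite mulr_le0_ge0 ?sqrtr_ge0 | lra].
have half_ge0 : 0 <= y / 2 by lra.
rewrite -[c]ger0_norm ?(ltW c_gt0) // -sqrtr_sqr -sqrtrM ?sqr_ge0 //.
rewrite -[y / 2]ger0_norm // -sqrtr_sqr ler_sqrt ?sqr_ge0 //.
have : 0 <= y * (y - (4 * c ^+ 2 + 1) * L).
  by rewrite mulr_ge0 ?subr_ge0 ?(ltW y_gt0).
have : 0 <= y * L by rewrite mulr_ge0 ?(ltW y_gt0).
nra.
Qed.

Lemma ln_le_mul_eventually (k : nat) (p : nat -> R) (M : R) (n0 : nat) :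
  (2 <= k)%N -> 0 <= M ->
  (forall n, (n0 <= n)%N -> ln (n%:R : R) / n%:R `^ (k.-1%:R / k%:R) <= p n) ->
  exists N, forall n, (N <= n)%N ->
    0 < ln (n%:R : R) /\ M * ln (n%:R : R) <= p n * n%:R.
Proof.
move=> k_ge2 M_ge0 p_ge.
exists (maxn (maxn n0 2) (Num.truncn (M ^+ k)).+1) => n; rewrite !geq_max.
case/andP=> /andP[n_ge_n0 n_ge2] Mk_lt_n.
have n_gt1 : 1 < n%:R :> R by rewrite ltr1n.
have ln_gt0 : 0 < ln (n%:R : R) by apply: ln_gt0.
split=> //; apply: le_trans (ln_mul_root_le _ _ (p_ge n n_ge_n0)).
- rewrite mulrC ler_pM2l // le_powR_invn //; first lia.
  by apply: ltW; apply: lt_le_trans (truncnS_gt _) _; rewrite ler_nat.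
- lia.
- lra.
Qed.

End Asymptotics.

Theorem lemma5p4 (R : realType) (k i : nat) (p : nat -> R)
    (c_up c_deg c_edge c_codeg c_phi c_eig : R) (eps : nat -> R) :
  (2 <= k)%N ->
  0 < c_up ->
  (forall d : R, 0 < d -> exists N : nat, forall n, (N <= n)%N -> `|eps n| <= d) ->
  (exists n0 : nat, forall n : nat, (n0 <= n)%N ->
     ln (n%:R : R) / (n%:R `^ (k.-1%:R / k%:R)) <= p n /\
     p n <= 1 - c_up * (ln (n%:R : R) ^+ 4 / n%:R)) ->
  exists C : R, exists N : nat, 0 < C /\
    forall n : nat, (N <= n)%N ->
    forall e : rel 'I_n,
      in_Gknp k (p n) c_deg c_edge c_codeg c_phi c_eig (eps n) e ->
      forall v w : 'I_n, v != w ->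
        `|first_hit R e i w v - walk_at R e i w v|
          <= C / (p n ^+ 2 * (n%:R : R) ^+ 2).
Proof.
move=> k_ge2 _ _ [n0 p_bounds].
have M_gt0 : 0 < 4 * c_deg ^+ 2 + 1 by have := sqr_ge0 c_deg; lra.
have [N pn_large] :=
  ln_le_mul_eventually k_ge2 (ltW M_gt0) (fun n hn => (p_bounds n hn).1).
exists (4 * i%:R + 1), N; split; first by have := ler0n R i; lra.
move=> n /pn_large [ln_gt0 ln_le] e [_ [_ [_ [deg_dev _]]]] v w v_neq_w.
set y := p n * n%:R in ln_le deg_dev *.
have y_gt0 : 0 < y := lt_le_trans (mulr_gt0 M_gt0 ln_gt0) ln_le.
have deg_ge u : y / 2 <= (deg e u)%:R.
  have := deg_dev u; rewrite ler_norml => /andP[dev_lo _].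
  have := mul_sqrt_le_half (ltW ln_gt0) y_gt0 ln_le; lra.
have y_half_gt0 : 0 < y / 2 by lra.
apply: le_trans (dist_first_hit_walk_at_le y_half_gt0 deg_ge i v_neq_w) _.
rewrite -exprMn -/y invf_div expr_div_n mulrA ler_pM2r ?invr_gt0 ?exprn_gt0 //.
by have := ler0n R i; rewrite expr2; lra.
Qed.
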